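(* A smooth cubic surface over $\mathbb{Q}$ that does not contain three pairwise disjoint lines defined over $\mathbb{Q}$ cannot contain exactly four lines defined over $\mathbb{Q}$.
   Context: A line on the surface is defined over $\mathbb{Q}$ if it is cut out by linear forms with rational coefficients and is contained in the surface. *)

From HB Require Import structures.
From mathcomp Require Import all_boot all_order all_algebra all_field.
From mathcomp Require Import mpoly.
Set Implicit Arguments. Unset Strict Implicit. Unset Printing Implicit Defensive.
Import GRing.Theory Num.Theory.
Local Open Scope ring_scope.

(* Projective 3-space P^3 has homogeneous coordinates indexed by 'I_4.
   A cubic surface over Q is the zero locus of a cubic form
   F : {mpoly rat[4]} (homogeneous of degree 3).  Geometric notions
   (smoothness, containment of a line) are tested over algC, an
   algebraic closure of Q. *)

Definition FC (F : {mpoly rat[4]}) : {mpoly algC[4]} := map_mpoly ratr F.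

Definition cubic_form (F : {mpoly rat[4]}) : Prop := F \is 3.-homog.

Definition smooth_surface (F : {mpoly rat[4]}) : Prop :=
  forall x : 'I_4 -> algC, (exists i, x i != 0) ->
    ~ ((FC F).@[x] = 0 /\ forall i : 'I_4, (mderiv i (FC F)).@[x] = 0).

(* A line of P^3 defined over Q: the projectivisation of a 2-dimensional
   subspace W of Q^4 (equivalently, cut out by two independent rational
   linear forms, namely the annihilator of W). *)
Definition Qline (W : {vspace 'rV[rat]_4}) : Prop := \dim W = 2%N.

(* W (over Q) is contained in the surface: F vanishes on every Qbar-point of
   the line, i.e. on every algC-linear combination of vectors of W. *)
Definition line_in_surface (F : {mpoly rat[4]}) (W : {vspace 'rV[rat]_4}) : Prop :=
  forall s : seq (algC * 'rV[rat]_4), all (fun p => p.2 \in W) s ->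
    (FC F).@[fun i => \sum_(p <- s) p.1 * ratr (p.2 0 i)] = 0.

Definition Qline_on (F : {mpoly rat[4]}) (W : {vspace 'rV[rat]_4}) : Prop :=
  Qline W /\ line_in_surface F W.

(* two projective lines are disjoint iff the underlying planes meet in 0
   (intersection commutes with extension of scalars to Qbar) *)
Definition disjoint_lines (W1 W2 : {vspace 'rV[rat]_4}) : Prop :=
  (W1 :&: W2)%VS = 0%VS.

Definition has_three_disjoint_Qlines (F : {mpoly rat[4]}) : Prop :=
  exists W1 W2 W3, [/\ Qline_on F W1, Qline_on F W2, Qline_on F W3 &
    [/\ disjoint_lines W1 W2, disjoint_lines W1 W3 & disjoint_lines W2 W3]].

Definition exactly_n_Qlines (F : {mpoly rat[4]}) (n : nat) : Prop :=
  exists s : seq {vspace 'rV[rat]_4},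
    [/\ uniq s, size s = n & forall W, W \in s <-> Qline_on F W].

From HB Require Import structures.
From mathcomp Require Import all_boot all_order all_algebra all_field.
From mathcomp Require Import mpoly.
From mathcomp Require Import ring zify.
Set Implicit Arguments. Unset Strict Implicit. Unset Printing Implicit Defensive.
Import GRing.Theory Num.Theory.
Local Open Scope ring_scope.

(* Suppose the Q-lines are exactly four.  Among three of them two meet, say
   A and B, and span a plane P.  The section of S by P vanishes on A and B,
   so in coordinates (x, y, z) of P with A = {z = 0}, B = {y = 0} it is
   y z l(x, y, z) for a linear form l, which has rational coefficients by
   interpolation.  Smoothness excludes l proportional to y or z (a section
   y z^2 is singular at a point of the double line, where a directional
   derivative, a binary quadratic form, vanishes), so l = 0 is a third
   Q-line C and P meets S only along A, B and C.  Then C is one of the four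
   lines; the fourth one, D, meets P in a point of A, B or C, and the same
   construction for D and that line shows that D lies in P.  Hence D is
   covered by A, B and C, which is impossible for a line. *)

Lemma homog_prodX (n k : nat) (R : comNzRingType) (L : 'I_n -> {mpoly R[k]})
    (m : 'I_n -> nat) (s : seq 'I_n) :
  (forall j, L j \is 1.-homog) ->
  \prod_(i <- s) L i ^+ m i \is (\sum_(i <- s) m i)%N.-homog.
Proof.
move=> hL; elim: s => [|i s IH]; first by rewrite !big_nil dhomog1.
rewrite !big_cons; apply: dhomogM => //.
by have := dhomogMn (m i) (hL i); rewrite mul1n.
Qed.

Definition plane_pt (U A B : 'I_4 -> algC) (x y z : algC) : 'I_4 -> algC :=
  fun k => x * U k + y * A k + z * B k.
Definition coords3 (x y z : algC) : 'I_3 -> algC := fun k => [:: x; y; z]`_k.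

Lemma restrict_to_plane d (p : {mpoly algC[4]}) U A B : p \is d.-homog ->
  exists Q : {mpoly algC[3]}, Q \is d.-homog /\
   forall x y z, p.@[plane_pt U A B x y z] = Q.@[coords3 x y z].
Proof.
move=> hp.
pose X (j : nat) (hj : (j < 3)%N) : {mpoly algC[3]} := 'X_(Ordinal hj).
pose L k := U k *: X 0%N isT + A k *: X 1%N isT + B k *: X 2%N isT.
have hL k : L k \is 1.-homog.
  by rewrite /L !dhomogD ?dhomogZ ?dhomogX //; apply/eqP; apply: mdeg1.
exists (p \mPo [tuple L k | k < 4]); split.
  rewrite comp_mpolyEX big_seq.
  apply: (big_ind (fun q : {mpoly algC[3]} => q \is d.-homog)); first exact: dhomog0.
    by move=> ? ? hx hy; exact: (dhomogD hx hy).
  move=> m hm; apply: dhomogZ; rewrite comp_mpolyX.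
  have -> : d = (\sum_(i <- index_enum 'I_4) m i)%N.
    by rewrite -(dhomog_mf hp hm); apply: mdegE.
  by apply: homog_prodX => k; rewrite tnth_mktuple; exact: hL.
move=> x y z; rewrite comp_mpoly_meval; apply: meval_eq => k.
rewrite tnth_mktuple /L !mevalD !mevalZ !mevalXU /plane_pt /coords3 /=.
by rewrite mulrC [A k * _]mulrC [B k * _]mulrC.
Qed.

Definition ternary_cubic (c : nat -> nat -> algC) (x y z : algC) : algC :=
  c 3%N 0%N * x^+3 + c 2%N 1%N * x^+2 * y + c 2%N 0%N * x^+2 * z
  + c 1%N 2%N * x * y^+2 + c 1%N 1%N * x * y * z + c 1%N 0%N * x * z^+2
  + c 0%N 3%N * y^+3 + c 0%N 2%N * y^+2 * z + c 0%N 1%N * y * z^+2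
  + c 0%N 0%N * z^+3.

Definition ternary_quadric (c : nat -> nat -> algC) (x y z : algC) : algC :=
  c 2%N 0%N * x^+2 + c 1%N 1%N * x * y + c 1%N 0%N * x * z
  + c 0%N 2%N * y^+2 + c 0%N 1%N * y * z + c 0%N 0%N * z^+2.

Section TernaryForms.
Variables (d : nat) (Form : (nat -> nat -> algC) -> algC -> algC -> algC -> algC).
Hypothesis Form0 : forall x y z, Form (fun _ _ => 0) x y z = 0.
Hypothesis Form_lin : forall (k : algC) c1 c2 x y z,
  Form (fun a b => k * c1 a b + c2 a b) x y z = k * Form c1 x y z + Form c2 x y z.
Hypothesis Form_monomial : forall i j k, (i + j + k = d)%N ->
  exists c, forall x y z, x^+i * y^+j * z^+k = Form c x y z.

Lemma homog3_rep (Q : {mpoly algC[3]}) : Q \is d.-homog ->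
  exists c, forall x y z, Q.@[coords3 x y z] = Form c x y z.
Proof.
move=> hQ.
suff: forall s : seq 'X_{1..3}, (forall m, m \in s -> mdeg m = d) ->
  exists c, forall x y z,
    (\sum_(m <- s) Q@_m *: 'X_[m]).@[coords3 x y z] = Form c x y z.
  case/(_ (msupp Q)) => [m hm|c hc]; first exact: (dhomog_mf hQ hm).
  by exists c => x y z; rewrite {1}(mpolyE Q); exact: hc.
elim => [|m s IH] hs.
  by exists (fun _ _ => 0) => x y z; rewrite big_nil meval0 Form0.
case: IH => [m' hm'|c hc]; first by apply: hs; rewrite inE hm' orbT.
have [c' hc'] : exists c', forall x y z, ('X_[m]).@[coords3 x y z] = Form c' x y z.
  move: (hs m (mem_head _ _)).
  rewrite mdegE !big_ord_recl big_ord0 addn0 addnA => /Form_monomial [c' hc'].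
  by exists c' => x y z; rewrite mevalX !big_ord_recl big_ord0 mulr1 mulrA -hc'.
exists (fun a b => Q@_m * c' a b + c a b) => x y z.
by rewrite big_cons mevalD mevalZ hc hc' Form_lin.
Qed.
End TernaryForms.

Lemma ternary_cubic_rep (Q : {mpoly algC[3]}) : Q \is 3.-homog ->
  exists c, forall x y z, Q.@[coords3 x y z] = ternary_cubic c x y z.
Proof.
apply: homog3_rep => [x y z|k c1 c2 x y z|i j k h]; rewrite /ternary_cubic.
- by ring.
- by ring.
exists (fun a b => ((a == i) && (b == j))%:R) => x y z.
case: i h => [|[|[|[|i]]]] h; case: j h => [|[|[|[|j]]]] h;
  case: k h => [|[|[|[|k]]]] h; try (exfalso; lia).
all: rewrite /=; ring.
Qed.

Lemma ternary_quadric_rep (Q : {mpoly algC[3]}) : Q \is 2.-homog ->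
  exists c, forall x y z, Q.@[coords3 x y z] = ternary_quadric c x y z.
Proof.
apply: homog3_rep => [x y z|k c1 c2 x y z|i j k h]; rewrite /ternary_quadric.
- by ring.
- by ring.
exists (fun a b => ((a == i) && (b == j))%:R) => x y z.
case: i h => [|[|[|i]]] h; case: j h => [|[|[|j]]] h;
  case: k h => [|[|[|k]]] h; try (exfalso; lia).
all: rewrite /=; ring.
Qed.

(* A cubic polynomial function on algC vanishing everywhere has zero
   coefficients (its values at 0, 1, -1 and 2 suffice). *)
Lemma cubic_poly_eq0 (a3 a2 a1 a0 : algC) :
  (forall x, a3 * x ^+ 3 + a2 * x ^+ 2 + a1 * x + a0 = 0) ->
  [/\ a3 = 0, a2 = 0, a1 = 0 & a0 = 0].
Proof.
move=> h.
have h0 := h 0; have h1 := h 1; have hm := h (-1); have h2 := h 2%:R.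
have e0 : a0 = 0 by rewrite -h0; ring.
have e2 : a2 = 0.
  have : 2%:R * a2 = 0.
    have -> : 2%:R * a2 = (a3 * 1 ^+ 3 + a2 * 1 ^+ 2 + a1 * 1 + a0)
       + (a3 * (-1) ^+ 3 + a2 * (-1) ^+ 2 + a1 * (-1) + a0) - 2%:R * a0 by ring.
    by rewrite h1 hm e0; ring.
  by move/eqP; rewrite mulf_eq0 pnatr_eq0 /= => /eqP.
have e3 : a3 = 0.
  have : 6%:R * a3 = 0.
    have -> : 6%:R * a3 = (a3 * 2%:R ^+ 3 + a2 * 2%:R ^+ 2 + a1 * 2%:R + a0)
       - 2%:R * (a3 * 1 ^+ 3 + a2 * 1 ^+ 2 + a1 * 1 + a0) - 2%:R * a2 + a0 by ring.
    by rewrite h1 h2 e2 e0; ring.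
  by move/eqP; rewrite mulf_eq0 pnatr_eq0 /= => /eqP.
split => //; have := h1; rewrite e3 e2 e0 => <-; ring.
Qed.

Lemma binary_quadratic_zero (a b c : algC) :
  exists x y : algC, ~ (x = 0 /\ y = 0) /\ a * x ^+ 2 + b * x * y + c * y ^+ 2 = 0.
Proof.
have [c0|hc] := eqVneq c 0.
  by exists 0, 1; split; [case=> _ /eqP; rewrite oner_eq0 | rewrite c0; ring].
exists 1, ((- b + sqrtC (b ^+ 2 - 4%:R * a * c)) / (2%:R * c)).
split; first by case=> /eqP; rewrite oner_eq0.
have h2 : (2%:R : algC) != 0 by rewrite pnatr_eq0.
have h4 : (4%:R * c : algC) != 0 by rewrite mulf_neq0 // pnatr_eq0.
apply: (mulfI h4); rewrite mulr0.
set s := sqrtC _; have hs : s ^+ 2 = b ^+ 2 - 4%:R * a * c by rewrite sqrtCK.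
have -> : 4%:R * c * (a * 1 ^+ 2 + b * 1 * ((- b + s) / (2%:R * c))
    + c * ((- b + s) / (2%:R * c)) ^+ 2) = s ^+ 2 - (b ^+ 2 - 4%:R * a * c).
  by field.
by rewrite hs subrr.
Qed.

Lemma poly_ext_algC (P Q : {poly algC}) : (forall t, P.[t] = Q.[t]) -> P = Q.
Proof.
move=> h; apply/eqP; rewrite -subr_eq0; apply/eqP.
apply: (@roots_geq_poly_eq0 _ _ [seq i%:R | i <- iota 0 (size (P - Q))]).
- by apply/allP => x /mapP [i _ ->]; rewrite /root hornerD hornerN h subrr.
- by rewrite map_inj_uniq ?iota_uniq // => i j /eqP; rewrite eqr_nat => /eqP.
- by rewrite size_map size_iota.
Qed.

(* The derivative of q at p0 in the direction w; it is the coefficient of t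
   in the polynomial t |-> q(p0 + t w). *)
Definition dderiv (p0 w : 'I_4 -> algC) (q : {mpoly algC[4]}) : algC :=
  \sum_(i < 4) w i * (mderiv i q).@[p0].

Section Taylor.
Variables (p0 w : 'I_4 -> algC).

Lemma dderivD q1 q2 : dderiv p0 w (q1 + q2) = dderiv p0 w q1 + dderiv p0 w q2.
Proof.
by rewrite /dderiv -big_split; apply: eq_bigr => i _; rewrite mderivD mevalD mulrDr.
Qed.

Lemma dderivZ c q : dderiv p0 w (c *: q) = c * dderiv p0 w q.
Proof.
by rewrite /dderiv mulr_sumr; apply: eq_bigr => i _; rewrite mderivZ mevalZ mulrCA.
Qed.

Lemma dderivM q1 q2 :
  dderiv p0 w (q1 * q2) = q1.@[p0] * dderiv p0 w q2 + dderiv p0 w q1 * q2.@[p0].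
Proof.
rewrite /dderiv mulr_sumr mulr_suml -big_split; apply: eq_bigr => i _.
by rewrite /= mderivM mevalD !mevalM; ring.
Qed.

Definition line_poly (q : {mpoly algC[4]}) : {poly algC} :=
  (map_mpoly (polyC : algC -> {poly algC}) q).@[fun i => (p0 i)%:P + w i *: 'X].

Arguments line_poly : simpl never.

Lemma line_polyD q1 q2 : line_poly (q1 + q2) = line_poly q1 + line_poly q2.
Proof. by rewrite /line_poly raddfD mevalD. Qed.
Lemma line_polyZ c q : line_poly (c *: q) = c%:P * line_poly q.
Proof. by rewrite /line_poly map_mpolyZ mevalZ. Qed.
Lemma line_polyM q1 q2 : line_poly (q1 * q2) = line_poly q1 * line_poly q2.
Proof. by rewrite /line_poly rmorphM mevalM. Qed.
Lemma line_poly1 : line_poly 1 = 1.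
Proof. by rewrite /line_poly rmorph1 meval1. Qed.
Lemma line_polyX i : line_poly 'X_i = (p0 i)%:P + w i *: 'X.
Proof. by rewrite /line_poly map_mpolyX mevalXU. Qed.

(* First order Taylor expansion of q along the line; it is preserved by the
   ring operations, hence holds for every q. *)
Definition taylor1 (q : {mpoly algC[4]}) : Prop :=
  (forall t, (line_poly q).[t] = q.@[fun i => p0 i + t * w i])
  /\ (line_poly q)`_1 = dderiv p0 w q.

Lemma taylor1D q1 q2 : taylor1 q1 -> taylor1 q2 -> taylor1 (q1 + q2).
Proof.
move=> [h1 e1] [h2 e2]; rewrite /taylor1 line_polyD; split.
  by move=> t; rewrite hornerD mevalD -h1 -h2.
by rewrite coefD dderivD -e1 -e2.
Qed.

Lemma taylor1Z c q : taylor1 q -> taylor1 (c *: q).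
Proof.
move=> [h1 e1]; rewrite /taylor1 line_polyZ; split.
  by move=> t; rewrite hornerCM mevalZ -h1.
by rewrite coefCM dderivZ -e1.
Qed.

Lemma taylor1M q1 q2 : taylor1 q1 -> taylor1 q2 -> taylor1 (q1 * q2).
Proof.
move=> [h1 e1] [h2 e2]; rewrite /taylor1 line_polyM; split.
  by move=> t; rewrite hornerM mevalM -h1 -h2.
have z1 : q1.@[p0] = (line_poly q1)`_0.
  by rewrite -horner_coef0 h1; apply: meval_eq => i; rewrite mul0r addr0.
have z2 : q2.@[p0] = (line_poly q2)`_0.
  by rewrite -horner_coef0 h2; apply: meval_eq => i; rewrite mul0r addr0.
rewrite dderivM z1 z2 -e1 -e2 coefM !big_ord_recr big_ord0 /= subn0 subnn add0r.
by rewrite addrC.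
Qed.

Lemma taylor1_1 : taylor1 1.
Proof.
rewrite /taylor1 line_poly1; split; first by move=> t; rewrite hornerC meval1.
rewrite coefC /dderiv big1 // => i _.
by rewrite -mpolyC1 mderivC meval0 mulr0.
Qed.

Lemma taylor1X i : taylor1 'X_i.
Proof.
rewrite /taylor1 line_polyX; split.
  by move=> t; rewrite hornerD hornerZ hornerX hornerC mevalXU mulrC.
rewrite coefD coefC coefZ coefX /= add0r mulr1 /dderiv (bigD1 i) //= big1 ?addr0.
  rewrite mderivX mnm1E eqxx.
  have -> : (U_(i) - U_(i) = 0)%MM by apply/mnmP => k; rewrite mnmBE subnn mnmE.
  by rewrite mpolyX0 scale1r meval1 mulr1.
by move=> j hj; rewrite mderivX mnm1E eq_sym (negbTE hj) scale0r meval0 mulr0.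
Qed.

Lemma taylor1_all q : taylor1 q.
Proof.
elim/mpolyind: q => [|c m q _ _ hq].
  rewrite /taylor1 /line_poly raddf0 meval0.
  split; first by move=> t; rewrite horner0 meval0.
  by rewrite coef0 /dderiv big1 // => i _; rewrite mderiv0 meval0 mulr0.
apply: taylor1D => //; apply: taylor1Z.
rewrite mpolyXE_id; apply: big_ind => //; [exact: taylor1_1 | exact: taylor1M |].
move=> i _; elim: (m i) => [|k IH]; first by rewrite expr0; exact: taylor1_1.
by rewrite exprS; apply: taylor1M => //; exact: taylor1X.
Qed.

Lemma dderiv_coef1 q (P : {poly algC}) :
  (forall t, q.@[fun i => p0 i + t * w i] = P.[t]) -> dderiv p0 w q = P`_1.
Proof.
have [h <-] := taylor1_all q => hP.
suff -> : line_poly q = P by [].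
by apply: poly_ext_algC => t; rewrite h hP.
Qed.

Lemma dderiv_square0 q (c : algC) :
  (forall t, q.@[fun i => p0 i + t * w i] = c * t ^+ 2) -> dderiv p0 w q = 0.
Proof.
move=> h; rewrite (@dderiv_coef1 q (c *: 'X^2)) ?coefZ ?coefXn ?mulr0 //.
by move=> t; rewrite h hornerZ hornerXn.
Qed.
End Taylor.

Lemma dderiv_lin4 p0 w1 w2 w3 w4 q (a1 a2 a3 a4 : algC) :
  dderiv p0 (fun i => a1 * w1 i + a2 * w2 i + a3 * w3 i + a4 * w4 i) q =
  a1 * dderiv p0 w1 q + a2 * dderiv p0 w2 q + a3 * dderiv p0 w3 q + a4 * dderiv p0 w4 q.
Proof. by rewrite /dderiv !mulr_sumr -!big_split; apply: eq_bigr => i _ /=; ring. Qed.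

Lemma dderiv_delta p0 q i0 : dderiv p0 (fun i => (i == i0)%:R) q = (mderiv i0 q).@[p0].
Proof.
rewrite /dderiv (bigD1 i0) //= eqxx mul1r big1 ?addr0 // => j hj.
by rewrite (negbTE hj) mul0r.
Qed.

Lemma mderiv_homog d (p : {mpoly algC[4]}) i :
  p \is d.+1.-homog -> mderiv i p \is d.-homog.
Proof.
move=> hp; apply/dhomogP => m; rewrite mcoeff_msupp mcoeff_mderiv => hm.
have hm' : (m + U_(i))%MM \in msupp p.
  by rewrite mcoeff_msupp; apply: contraNneq hm => ->; rewrite mul0rn.
have : mdeg (m + U_(i))%MM = d.+1 := dhomog_mf hp hm'.
by rewrite mdegD mdeg1 addn1 => -[].
Qed.

Section Subspaces.
Variables (K : fieldType) (vT : vectType K).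
Implicit Types (u a b v : vT) (W X Y : {vspace vT}).

Lemma mem_line_addl u W : u \in (<[u]> + W)%VS.
Proof. by apply: (subvP (addvSl _ _)); exact: memv_line. Qed.

Lemma mem_line_addr W a : a \in (W + <[a]>)%VS.
Proof. by apply: (subvP (addvSr _ _)); exact: memv_line. Qed.

Lemma line_indep u a x y :
  u != 0 -> a \notin <[u]>%VS -> x *: u + y *: a = 0 -> x = 0 /\ y = 0.
Proof.
move=> hu ha e.
have hy : y = 0.
  apply/eqP; apply: contraNT ha => hy; apply/vlineP; exists (- x / y).
  apply: (scalerI hy); rewrite scalerA mulrCA divff // mulr1 scaleNr.
  by apply/eqP; rewrite -addr_eq0 addrC e.
move: e; rewrite hy scale0r addr0 => /eqP; rewrite scaler_eq0 (negbTE hu) orbF.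
by move/eqP.
Qed.

Lemma cap_line0 W b : b \notin W -> (W :&: <[b]>)%VS = 0%VS.
Proof.
move=> hb; apply/eqP; rewrite -subv0; apply/subvP => v.
rewrite memv_cap memv0 => /andP [hv /vlineP [k e]].
apply/eqP; rewrite e; have [->|hk] := eqVneq k 0; first by rewrite scale0r.
by exfalso; move/negP: hb; apply; rewrite -(scalerK hk b) -e memvZ.
Qed.

Lemma dim_add_line W b : b \notin W -> \dim (W + <[b]>) = (\dim W).+1.
Proof.
move=> hb; have hb0 : b != 0 by apply: contraNneq hb => ->; exact: mem0v.
by have := dimv_sum_cap W <[b]>; rewrite cap_line0 // dimv0 addn0 dim_vline hb0 addn1.
Qed.

Lemma dim_plane u a : u != 0 -> a \notin <[u]>%VS -> \dim (<[u]> + <[a]>) = 2%N.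
Proof. by move=> hu ha; rewrite dim_add_line // dim_vline hu. Qed.

Lemma plane_basis W u : \dim W = 2%N -> u \in W -> u != 0 ->
  exists a, a \notin <[u]>%VS /\ W = (<[u]> + <[a]>)%VS.
Proof.
move=> hW huW hu.
have hcap : (W :&: <[u]>)%VS = <[u]>%VS by apply/capv_idPr; rewrite -memvE.
have hd : \dim (W :\: <[u]>) = 1%N.
  by have := dimv_cap_compl W <[u]>; rewrite hcap dim_vline hu hW => -[].
set a := vpick (W :\: <[u]>).
have haD : a \in (W :\: <[u]>)%VS by exact: memv_pick.
have ha0 : a != 0 by rewrite vpick0 -dimv_eq0 hd.
have ha : a \notin <[u]>%VS.
  apply: contra ha0 => hau.
  by rewrite -memv0 -(capv_diff W <[u]>) memv_cap haD hau.
exists a; split => //.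
have haW : a \in W by move: haD; apply/subvP; exact: diffvSl.
apply/eqP; rewrite eq_sym eqEdim subv_add -!memvE huW haW /= hW dim_plane //.
Qed.

Lemma dim_cap_planes X Y : \dim X = 2%N -> \dim Y = 2%N -> X != Y ->
  (\dim (X :&: Y) <= 1)%N.
Proof.
move=> hX hY hne; rewrite leqNgt; apply/negP => h.
have h2 : \dim (X :&: Y) = 2%N.
  by apply/eqP; rewrite eqn_leq h -{1}hX dimvS // capvSl.
have e1 : (X :&: Y)%VS = X by apply/eqP; rewrite eqEdim capvSl h2 hX /=.
have e2 : (X :&: Y)%VS = Y by apply/eqP; rewrite eqEdim capvSr h2 hY /=.
by move/eqP: hne; apply; rewrite -e1 e2.
Qed.

Lemma dim_add_meeting_planes X Y : \dim X = 2%N -> \dim Y = 2%N -> X != Y ->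
  (X :&: Y)%VS != 0%VS -> \dim (X + Y) = 3%N.
Proof.
move=> dX dY hne hc; have := dimv_sum_cap X Y; rewrite dX dY.
have := dim_cap_planes dX dY hne; move: hc; rewrite -dimv_eq0; lia.
Qed.

Lemma plane_eq_of_two_points W X (d1 d2 : vT) (s t : K) :
  W = (<[d1]> + <[d2]>)%VS -> s != t ->
  d1 + s *: d2 \in X -> d1 + t *: d2 \in X -> (W <= X)%VS.
Proof.
move=> -> hst hs ht.
have d2X : d2 \in X.
  have -> : d2 = (s - t)^-1 *: ((d1 + s *: d2) - (d1 + t *: d2)).
    rewrite opprD addrACA subrr add0r -scalerBl scalerA mulVf ?scale1r //.
    by rewrite subr_eq0.
  by rewrite memvZ // memvB.
have d1X : d1 \in X by rewrite -(addrK (s *: d2) d1) memvB // memvZ.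
by rewrite subv_add -!memvE d1X d2X.
Qed.
End Subspaces.

(* In characteristic zero, a projective line is not the union of three other
   lines: four of its points lie on the three lines, two on the same one. *)
Lemma plane_not_covered (K : numFieldType) (vT : vectType K) (A B C D : {vspace vT}) :
  [/\ \dim A = 2%N, \dim B = 2%N, \dim C = 2%N & \dim D = 2%N] ->
  [/\ D != A, D != B & D != C] ->
  ~ (forall v, v \in D -> [|| v \in A, v \in B | v \in C]).
Proof.
move=> [dA dB dC dD] [nA nB nC] hcov.
set d1 := vpick D.
have hd1 : d1 != 0 by rewrite vpick0 -dimv_eq0 dD.
have [d2 [_ eD]] := plane_basis dD (memv_pick D) hd1.
pose w (i : 'I_4) := d1 + i%:R *: d2.
have wD i : w i \in D by rewrite eD memv_add // ?memvZ // memv_line.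
pose L k := nth A [:: A; B; C] k.
(* line i indexes one of the three planes containing w i; it is injective,
   since D meets each of them in at most one w i. *)
pose line i : 'I_3 := if w i \in A then ord0 else if w i \in B then inord 1 else inord 2.
have hline i : w i \in L (line i).
  rewrite /line; have := hcov _ (wD i).
  case: ifP => [hA _|_ /=]; first by rewrite /L.
  by case: ifP => [hB _|_ /= hC]; rewrite /L inordK.
have hL (k : 'I_3) : \dim (L k) = 2%N /\ D != L k.
  by case: k => -[|[|[|]]] //= _; split.
have at_most_one X i j : \dim X = 2%N -> D != X -> w i \in X -> w j \in X -> i = j.
  move=> dX nX hi hj; apply/val_inj/eqP; apply: contraNT nX => hij.
  rewrite eqEdim dX dD leqnn andbT.
  by apply: (plane_eq_of_two_points eD _ hi hj); rewrite eqr_nat.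
have line_inj : injective line.
  move=> i j e; have [dX nX] := hL (line i).
  by apply: (at_most_one _ _ _ dX nX (hline i)); rewrite e hline.
by have := leq_card line line_inj; rewrite !card_ord.
Qed.

Notation V := 'rV[rat]_4.

Definition vec (v : V) : 'I_4 -> algC := fun i => ratr (v 0 i).

Lemma FC_homog F : cubic_form F -> FC F \is 3.-homog.
Proof.
move=> hF; apply/dhomogP => m.
rewrite (perm_mem (msupp_map_mpoly _ (fmorph_inj (@ratr algC)))) => hm.
exact: (dhomog_mf hF hm).
Qed.

Lemma FC_rat F (v : 'I_4 -> rat) : (FC F).@[fun i => ratr (v i)] = ratr (F.@[v]).
Proof.
rewrite !mevalE (perm_big _ (msupp_map_mpoly _ (fmorph_inj (@ratr algC)))).
rewrite rmorph_sum; apply: eq_bigr => m _.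
rewrite mcoeff_map_mpoly rmorphM rmorph_prod; congr (_ * _).
by apply: eq_bigr => i _; rewrite rmorphXn.
Qed.

Lemma line_pts_on_surface F W u a (B : 'I_4 -> algC) x y : line_in_surface F W ->
  u \in W -> a \in W -> (FC F).@[plane_pt (vec u) (vec a) B x y 0] = 0.
Proof.
move=> h hu ha; have := h [:: (x, u); (y, a)]; rewrite /= hu ha => /(_ isT) h0.
apply: etrans h0; apply: meval_eq => i; rewrite !big_cons big_nil /plane_pt /vec /=.
ring.
Qed.

Lemma rat_pts_on_surface F W v : line_in_surface F W -> v \in W -> F.@[fun i => v 0 i] = 0.
Proof.
move=> h hv; have := h [:: (1, v)]; rewrite /= hv => /(_ isT).
have -> : (FC F).@[fun i => \sum_(p <- [:: (1, v)]) p.1 * ratr (p.2 0 i)] =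
          (FC F).@[fun i => ratr (v 0 i)].
  by apply: meval_eq => i; rewrite big_cons big_nil /=; ring.
by rewrite FC_rat => /eqP; rewrite fmorph_eq0 => /eqP.
Qed.

Lemma span2_sum (c1 c2 : V) (s : seq (algC * V)) :
  all (fun p => p.2 \in (<[c1]> + <[c2]>)%VS) s ->
  exists X Y : algC, forall i,
    \sum_(p <- s) p.1 * ratr (p.2 0 i) = X * vec c1 i + Y * vec c2 i.
Proof.
elim: s => [|[k v] s IH] /=.
  by move=> _; exists 0, 0 => i; rewrite big_nil; ring.
move=> /andP [/memv_addP [w1 /vlineP [r1 ->] [w2 /vlineP [r2 ->] ->]] /IH [X [Y hXY]]].
exists (k * ratr r1 + X), (k * ratr r2 + Y) => i.
by rewrite big_cons hXY /vec /= !mxE rmorphD !rmorphM /=; ring.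
Qed.

Lemma vec_indep (u a : V) : u != 0 -> a \notin <[u]>%VS -> forall x y : algC,
  (forall i, x * vec u i + y * vec a i = 0) -> x = 0 /\ y = 0.
Proof.
move=> hu ha x y h.
have [i1 hi1] : exists i1, u 0 i1 != 0.
  apply/existsP; apply: contraNT hu; rewrite negb_exists => /forallP H.
  by apply/eqP/rowP => j; rewrite mxE; apply/eqP; move: (H j); rewrite negbK.
have hr : vec u i1 != 0 by rewrite fmorph_eq0.
suff hy : y = 0.
  split => //; move: (h i1); rewrite hy mul0r addr0 => /eqP.
  by rewrite mulf_eq0 (negbTE hr) orbF => /eqP.
apply/eqP; apply: contraNT ha => hy; apply/vlineP; exists (a 0 i1 / u 0 i1).
have ea j : vec a j = - x / y * vec u j.
  have e1 : y * vec a j = - (x * vec u j) by apply/eqP; rewrite -addr_eq0 addrC h.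
  by apply: (mulfI hy); rewrite e1; field.
apply/rowP => j; rewrite mxE; apply: (fmorph_inj (@ratr algC)).
rewrite !rmorphM fmorphV /= -/(vec a j) -/(vec u j) -/(vec a i1) -/(vec u i1) !ea.
by field; rewrite hr.
Qed.

Lemma complete_basis (u a b : V) :
  u != 0 -> a \notin <[u]>%VS -> b \notin (<[u]> + <[a]>)%VS ->
  exists e : V, forall w : V, exists x y z r : rat,
    w = x *: u + y *: a + z *: b + r *: e.
Proof.
move=> hu ha hb; set P := (<[u]> + <[a]> + <[b]>)%VS.
have dP : \dim P = 3%N by rewrite dim_add_line // dim_plane.
set e := vpick P^C.
have he : e \notin P.
  have he0 : e != 0 by rewrite vpick0 -dimv_eq0 dimv_compl dP dimvf.
  apply: contra he0 => heP; rewrite -memv0 -(capv_compl P) memv_cap heP.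
  exact: memv_pick.
have full : (P + <[e]>)%VS = fullv.
  by apply/eqP; rewrite eqEdim subvf dimvf dim_add_line // dP.
exists e => w; move: (memvf w); rewrite -full.
move=> /memv_addP [w1 /memv_addP [w2 /memv_addP [w3 /vlineP [x ->]
  [w4 /vlineP [y ->] ->]] [w5 /vlineP [z ->] ->]] [w6 /vlineP [r ->] ->]].
by exists x, y, z, r.
Qed.

Lemma partials_vanish (q : {mpoly algC[4]}) (p : 'I_4 -> algC) (u a b e : V) :
  (forall w : V, exists x y z r : rat, w = x *: u + y *: a + z *: b + r *: e) ->
  dderiv p (vec u) q = 0 -> dderiv p (vec a) q = 0 ->
  dderiv p (vec b) q = 0 -> dderiv p (vec e) q = 0 ->
  forall i, (mderiv i q).@[p] = 0.
Proof.
move=> full hu ha hb he i0; rewrite -dderiv_delta.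
have [x [y [z [r hw]]]] := full (delta_mx 0 i0).
have -> : dderiv p (fun i => (i == i0)%:R) q = dderiv p
    (fun i => ratr x * vec u i + ratr y * vec a i + ratr z * vec b i + ratr r * vec e i) q.
  apply: eq_bigr => i _; congr (_ * _).
  have := congr1 (fun M : V => ratr (M 0 i) : algC) hw; rewrite /= !mxE /vec.
  by rewrite eqxx /= !rmorphD !rmorphM /= => <-; rewrite rmorph_nat.
by rewrite dderiv_lin4 hu ha hb he !mulr0 !addr0.
Qed.

(* Along a line, the derivative of a cubic form in a fixed direction is a
   binary quadratic form, so it vanishes at some point of the line. *)
Lemma dderiv_zero_on_line (q : {mpoly algC[4]}) (U A B E : 'I_4 -> algC) :
  q \is 3.-homog ->
  exists x0 y0 : algC, ~ (x0 = 0 /\ y0 = 0) /\ dderiv (plane_pt U A B x0 y0 0) E q = 0.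
Proof.
move=> hq.
pose G := \sum_(j < 4) E j *: mderiv j q.
have hG : G \is 2.-homog.
  apply: (big_ind (fun q : {mpoly algC[4]} => q \is 2.-homog)); first exact: dhomog0.
    by move=> ? ? h1 h2; exact: (dhomogD h1 h2).
  by move=> j _; apply: dhomogZ; apply: mderiv_homog.
have hGd p : G.@[p] = dderiv p E q.
  by rewrite /G raddf_sum /dderiv; apply: eq_bigr => j _; exact: mevalZ.
have [Q [hQ hQe]] := restrict_to_plane U A B hG.
have [c hc] := ternary_quadric_rep hQ.
have [x0 [y0 [hxy h0]]] := binary_quadratic_zero (c 2%N 0%N) (c 1%N 1%N) (c 0%N 2%N).
exists x0, y0; split => //.
by rewrite -hGd hQe hc /ternary_quadric; apply: etrans h0; ring.
Qed.

(* Smoothness criterion: a plane section of a smooth cubic surface is never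
   of the shape y z^2 (a line counted twice plus another line), since the
   surface would be singular at some point of the double line z = 0. *)
Lemma section_not_double_line F (u a b : V) (k : algC) :
  smooth_surface F -> cubic_form F ->
  u != 0 -> a \notin <[u]>%VS -> b \notin (<[u]> + <[a]>)%VS ->
  ~ (forall x y z, (FC F).@[plane_pt (vec u) (vec a) (vec b) x y z] = k * y * z ^+ 2).
Proof.
move=> hs hF hu ha hb hg.
have [e full] := complete_basis hu ha hb.
have [x0 [y0 [hxy he]]] :=
  dderiv_zero_on_line (vec u) (vec a) (vec b) (vec e) (FC_homog hF).
set p := plane_pt (vec u) (vec a) (vec b) x0 y0 0.
apply: (hs p).
  have [i hi|hn] := pickP (fun i => p i != 0); first by exists i.
  exfalso; apply: hxy; apply: (vec_indep hu ha) => i.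
  by move: (hn i) => /= /negbFE /eqP; rewrite /p /plane_pt mul0r addr0.
split; first by rewrite hg expr0n /= mulr0.
apply: (partials_vanish full) => //.
- apply: (@dderiv_square0 _ _ _ 0) => t; rewrite mul0r.
  have := hg (x0 + t) y0 0; rewrite expr0n /= mulr0 => <-.
  by apply: meval_eq => i; rewrite /p /plane_pt; ring.
- apply: (@dderiv_square0 _ _ _ 0) => t; rewrite mul0r.
  have := hg x0 (y0 + t) 0; rewrite expr0n /= mulr0 => <-.
  by apply: meval_eq => i; rewrite /p /plane_pt; ring.
- apply: (@dderiv_square0 _ _ _ (k * y0)) => t; rewrite -(hg x0 y0 t).
  by apply: meval_eq => i; rewrite /p /plane_pt; ring.
Qed.

(* Rational points of the plane spanned by u, a, b, in the coordinates
   (x, y, z); the line <[u]> + <[a]> is z = 0 and <[u]> + <[b]> is y = 0. *)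
Definition comb (u a b : V) (x y z : rat) : V := x *: u + y *: a + z *: b.

Lemma vec_comb (u a b : V) x y z i :
  vec (comb u a b x y z) i = plane_pt (vec u) (vec a) (vec b) (ratr x) (ratr y) (ratr z) i.
Proof. by rewrite /vec /comb /plane_pt !mxE !rmorphD !rmorphM. Qed.

Section PlaneCoordinates.
Variables (u a b : V).
Hypotheses (hu : u != 0) (ha : a \notin <[u]>%VS) (hb : b \notin (<[u]> + <[a]>)%VS).

Lemma comb_indep x y z : comb u a b x y z = 0 -> [/\ x = 0, y = 0 & z = 0].
Proof.
move=> e.
have hz : z = 0.
  apply/eqP; apply: contraNT hb => hz.
  have -> : b = (- x / z) *: u + (- y / z) *: a.
    apply: (scalerI hz); rewrite scalerDr !scalerA.
    have -> : z * (- x / z) = - x by field.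
    have -> : z * (- y / z) = - y by field.
    rewrite !scaleNr -opprD; apply/eqP; rewrite -addr_eq0 addrC.
    by move: e; rewrite /comb => ->.
  by rewrite memv_add // memvZ // memv_line.
move: e; rewrite /comb hz scale0r addr0 => e.
by have [-> ->] := line_indep hu ha e.
Qed.

Lemma comb_in_A x y z : comb u a b x y z \in (<[u]> + <[a]>)%VS -> z = 0.
Proof.
move/memv_addP => [w1 /vlineP [k ->] [w2 /vlineP [k' ->] e]].
suff : comb u a b (x - k) (y - k') z = 0 by case/comb_indep.
apply/rowP => i; move/rowP: e => /(_ i); rewrite !mxE => e.
transitivity ((x * u 0 i + y * a 0 i + z * b 0 i) - (k * u 0 i + k' * a 0 i)); first ring.
by rewrite e subrr.
Qed.

Lemma comb_in_B x y z : comb u a b x y z \in (<[u]> + <[b]>)%VS -> y = 0.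
Proof.
move/memv_addP => [w1 /vlineP [k ->] [w2 /vlineP [k' ->] e]].
suff : comb u a b (x - k) y (z - k') = 0 by case/comb_indep.
apply/rowP => i; move/rowP: e => /(_ i); rewrite !mxE => e.
transitivity ((x * u 0 i + y * a 0 i + z * b 0 i) - (k * u 0 i + k' * b 0 i)); first ring.
by rewrite e subrr.
Qed.

Lemma comb_in_plane x y z : comb u a b x y z \in (<[u]> + <[a]> + <[b]>)%VS.
Proof. by rewrite !memv_add // memvZ // memv_line. Qed.
End PlaneCoordinates.

Lemma section_through_two_lines F (u a b : V) : cubic_form F ->
  line_in_surface F (<[u]> + <[a]>)%VS -> line_in_surface F (<[u]> + <[b]>)%VS ->
  exists c1 c2 c3 : algC, forall x y z,
    (FC F).@[plane_pt (vec u) (vec a) (vec b) x y z] = y * z * (c1 * x + c2 * y + c3 * z).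
Proof.
move=> hF hA hB.
have [Q [hQ hQe]] := restrict_to_plane (vec u) (vec a) (vec b) (FC_homog hF).
have [c hc] := ternary_cubic_rep hQ.
have hgc x y z : (FC F).@[plane_pt (vec u) (vec a) (vec b) x y z] = ternary_cubic c x y z.
  by rewrite hQe hc.
have onA x y : ternary_cubic c x y 0 = 0.
  by rewrite -hgc (line_pts_on_surface _ _ _ hA (mem_line_addl _ _) (mem_line_addr _ _)).
have onB x z : ternary_cubic c x 0 z = 0.
  rewrite -hgc; apply: etrans (line_pts_on_surface (vec a) x z hB
    (mem_line_addl _ _) (mem_line_addr _ _)).
  by apply: meval_eq => i; rewrite /plane_pt; ring.
have [e30 e21 e12 e03] := @cubic_poly_eq0 (c 3%N 0%N) (c 2%N 1%N) (c 1%N 2%N) (c 0%N 3%N)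
  ltac:(by move=> x; rewrite -(onA x 1) /ternary_cubic; ring).
have [_ e20 e10 e00] := @cubic_poly_eq0 (c 3%N 0%N) (c 2%N 0%N) (c 1%N 0%N) (c 0%N 0%N)
  ltac:(by move=> x; rewrite -(onB x 1) /ternary_cubic; ring).
exists (c 1%N 1%N), (c 0%N 2%N), (c 0%N 1%N) => x y z.
by rewrite hgc /ternary_cubic e30 e21 e12 e03 e20 e10 e00; ring.
Qed.

(* The residual linear form has rational coefficients: they are recovered by
   interpolating the values of F at rational points of the plane. *)
Lemma residual_form_rational F (u a b : V) (c1 c2 c3 : algC) :
  (forall x y z, (FC F).@[plane_pt (vec u) (vec a) (vec b) x y z] =
     y * z * (c1 * x + c2 * y + c3 * z)) ->
  exists al be ga : rat, [/\ ratr al = c1, ratr be = c2 & ratr ga = c3].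
Proof.
move=> hg.
pose val x y z := F.@[fun i => comb u a b x y z 0 i].
have hval x y z : ratr (val x y z) =
    ratr y * ratr z * (c1 * ratr x + c2 * ratr y + c3 * ratr z).
  by rewrite /val -FC_rat -hg; apply: meval_eq => i; exact: vec_comb.
pose ga := (val 0 1 2%:R - 2%:R * val 0 1 1) / 2%:R.
exists (val 1 1 1 - val 0 1 1), (val 0 1 1 - ga), ga.
have h2 : (2%:R : algC) != 0 by rewrite pnatr_eq0.
have hga : ratr ga = c3.
  rewrite /ga !rmorphM rmorphB rmorphM fmorphV /= !hval !rmorph_nat rmorph0 rmorph1.
  by field.
split => //; rewrite rmorphB /= ?hga !hval rmorph0 rmorph1; ring.
Qed.

(* Combining with the smoothness criterion: the residual form involves x or
   both y and z, i.e. it is proportional neither to z nor to y. *)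
Lemma residual_linear_form F (u a b : V) :
  smooth_surface F -> cubic_form F ->
  u != 0 -> a \notin <[u]>%VS -> b \notin (<[u]> + <[a]>)%VS ->
  line_in_surface F (<[u]> + <[a]>)%VS -> line_in_surface F (<[u]> + <[b]>)%VS ->
  exists al be ga : rat,
    [/\ forall x y z, (FC F).@[plane_pt (vec u) (vec a) (vec b) x y z] =
          y * z * (ratr al * x + ratr be * y + ratr ga * z),
        ~ (al = 0 /\ be = 0) & ~ (al = 0 /\ ga = 0)].
Proof.
move=> hs hF hu ha hb hA hB.
have [c1 [c2 [c3 hc]]] := section_through_two_lines hF hA hB.
have [al [be [ga [e1 e2 e3]]]] := residual_form_rational hc; subst c1 c2 c3.
exists al, be, ga; split => // -[al0 e0].
  apply: (section_not_double_line (k := ratr ga) hs hF hu ha hb) => x y z.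
  by rewrite hc al0 e0 rmorph0; ring.
have hb' : b \notin <[u]>%VS by apply: contra hb; apply: (subvP (addvSl _ _)).
have ha' : a \notin (<[u]> + <[b]>)%VS.
  have -> : a = comb u a b 0 1 0 by rewrite /comb !scale0r scale1r add0r addr0.
  by apply/negP => /(comb_in_B hu ha hb) /eqP; rewrite oner_eq0.
apply: (section_not_double_line (k := ratr be) hs hF hu hb' ha') => x y z.
have -> : (FC F).@[plane_pt (vec u) (vec b) (vec a) x y z] =
          (FC F).@[plane_pt (vec u) (vec a) (vec b) x z y].
  by apply: meval_eq => i; rewrite /plane_pt; ring.
by rewrite hc al0 e0 rmorph0; ring.
Qed.

Lemma kernel_basis (al be ga : rat) : ~ (al = 0 /\ be = 0) -> ~ (al = 0 /\ ga = 0) ->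
  exists x1 y1 z1 x2 y2 z2 : rat,
  [/\ al * x1 + be * y1 + ga * z1 = 0 /\ al * x2 + be * y2 + ga * z2 = 0,
      forall x y z, al * x + be * y + ga * z = 0 -> exists s t,
        [/\ x = s * x1 + t * x2, y = s * y1 + t * y2 & z = s * z1 + t * z2],
      forall s t, s * x1 + t * x2 = 0 -> s * y1 + t * y2 = 0 ->
        s * z1 + t * z2 = 0 -> s = 0 /\ t = 0,
      (z1 != 0) || (z2 != 0) & (y1 != 0) || (y2 != 0)].
Proof.
move=> nab nag; have [al0|hal] := eqVneq al 0.
  have hbe : be != 0 by apply/eqP => e; apply: nab.
  have hga : ga != 0 by apply/eqP => e; apply: nag.
  exists 1, 0, 0, 0, ga, (- be); split; rewrite ?al0 ?oppr_eq0 ?hbe ?hga ?orbT //.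
  - by split; ring.
  - move=> x y z hl; exists x, (y / ga).
    have hz : ga * z = - (be * y).
      by apply/eqP; rewrite -addr_eq0 addrC; move: hl; rewrite mul0r add0r => ->.
    split; [by ring | by field | by apply: (mulfI hga); rewrite hz; field].
  - move=> s t e1 e2 _; move: e1; rewrite mulr1 mulr0 addr0 => e1; split => //.
    by move/eqP: e2; rewrite mulr0 add0r mulf_eq0 (negbTE hga) orbF => /eqP.
exists be, (- al), 0, ga, 0, (- al); split; rewrite ?oppr_eq0 ?hal ?orbT //.
- by split; ring.
- move=> x y z hl; exists (- y / al), (- z / al).
  have hx : al * x = - (be * y + ga * z).
    by apply/eqP; rewrite -addr_eq0 addrA; move: hl => ->.
  split; [by apply: (mulfI hal); rewrite hx; field | by field | by field].
- move=> s t _ e2 e3; split.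
    by move/eqP: e2; rewrite mulr0 addr0 mulf_eq0 oppr_eq0 (negbTE hal) orbF => /eqP.
  by move/eqP: e3; rewrite mulr0 add0r mulf_eq0 oppr_eq0 (negbTE hal) orbF => /eqP.
Qed.

Section ResidualLine.
Variables (F : {mpoly rat[4]}) (u a b : V) (al be ga x1 y1 z1 x2 y2 z2 : rat).
Hypotheses (hu : u != 0) (ha : a \notin <[u]>%VS) (hb : b \notin (<[u]> + <[a]>)%VS).
Hypothesis hg : forall x y z, (FC F).@[plane_pt (vec u) (vec a) (vec b) x y z] =
  y * z * (ratr al * x + ratr be * y + ratr ga * z).
Hypotheses (h1 : al * x1 + be * y1 + ga * z1 = 0) (h2 : al * x2 + be * y2 + ga * z2 = 0).
Hypothesis hspan : forall x y z, al * x + be * y + ga * z = 0 -> exists s t,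
  [/\ x = s * x1 + t * x2, y = s * y1 + t * y2 & z = s * z1 + t * z2].
Hypothesis hind : forall s t, s * x1 + t * x2 = 0 -> s * y1 + t * y2 = 0 ->
  s * z1 + t * z2 = 0 -> s = 0 /\ t = 0.

Let c1 := comb u a b x1 y1 z1.
Let c2 := comb u a b x2 y2 z2.

Lemma resid_comb s t : s *: c1 + t *: c2 =
  comb u a b (s * x1 + t * x2) (s * y1 + t * y2) (s * z1 + t * z2).
Proof. by apply/rowP => i; rewrite !mxE; ring. Qed.

(* The residual line is a plane of Q^4, and it lies on the surface since
   al x + be y + ga z vanishes on all algebraic combinations of c1, c2. *)
Lemma resid_dim : \dim (<[c1]> + <[c2]>) = 2%N.
Proof.
have hc1 : c1 != 0.
  apply/negP => /eqP /(comb_indep hu ha hb) [e1 e2 e3].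
  have [] := @hind 1 0; rewrite ?e1 ?e2 ?e3; try ring.
  by move/eqP; rewrite oner_eq0.
have hc2 : c2 \notin <[c1]>%VS.
  apply/negP => /vlineP [k e].
  have : comb u a b (- k * x1 + 1 * x2) (- k * y1 + 1 * y2) (- k * z1 + 1 * z2) = 0.
    by rewrite -resid_comb e scaleNr scale1r addNr.
  case/(comb_indep hu ha hb) => e1 e2 e3; have [_] := hind e1 e2 e3.
  by move/eqP; rewrite oner_eq0.
exact: dim_plane.
Qed.

Lemma resid_on_surface : line_in_surface F (<[c1]> + <[c2]>)%VS.
Proof.
move=> s hs; have [X [Y hXY]] := span2_sum hs.
transitivity ((FC F).@[plane_pt (vec u) (vec a) (vec b) (X * ratr x1 + Y * ratr x2)
   (X * ratr y1 + Y * ratr y2) (X * ratr z1 + Y * ratr z2)]).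
  by apply: meval_eq => i; rewrite hXY !vec_comb /plane_pt; ring.
rewrite hg.
have -> : ratr al * (X * ratr x1 + Y * ratr x2) + ratr be * (X * ratr y1 + Y * ratr y2)
   + ratr ga * (X * ratr z1 + Y * ratr z2) =
   X * ratr (al * x1 + be * y1 + ga * z1) + Y * ratr (al * x2 + be * y2 + ga * z2) :> algC.
  by rewrite !rmorphD !rmorphM /=; ring.
by rewrite h1 h2 rmorph0; ring.
Qed.

Lemma resid_covers x y z : F.@[fun i => comb u a b x y z 0 i] = 0 ->
  [|| z == 0, y == 0 | comb u a b x y z \in (<[c1]> + <[c2]>)%VS].
Proof.
move=> hF0.
have : (FC F).@[plane_pt (vec u) (vec a) (vec b) (ratr x) (ratr y) (ratr z)] = 0.
  by rewrite -(meval_eq _ (vec_comb u a b x y z)) /vec FC_rat hF0 rmorph0.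
rewrite hg.
have -> : ratr al * ratr x + ratr be * ratr y + ratr ga * ratr z =
          ratr (al * x + be * y + ga * z) :> algC by rewrite !rmorphD !rmorphM.
move/eqP; rewrite -!rmorphM fmorph_eq0 !mulf_eq0.
case/orP => [/orP [->|->]|/eqP hl]; rewrite ?orbT //.
have [s [t [-> -> ->]]] := hspan hl.
by rewrite -resid_comb memv_add ?orbT // memvZ // memv_line.
Qed.
End ResidualLine.

Lemma residual_line_coords F (u a b : V) : smooth_surface F -> cubic_form F ->
  u != 0 -> a \notin <[u]>%VS -> b \notin (<[u]> + <[a]>)%VS ->
  line_in_surface F (<[u]> + <[a]>)%VS -> line_in_surface F (<[u]> + <[b]>)%VS ->
  exists C : {vspace V}, [/\ Qline_on F C, C != (<[u]> + <[a]>)%VS,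
     C != (<[u]> + <[b]>)%VS, (C <= <[u]> + <[a]> + <[b]>)%VS &
     forall x y z : rat, F.@[fun i => comb u a b x y z 0 i] = 0 ->
       [|| z == 0, y == 0 | comb u a b x y z \in C]].
Proof.
move=> hs hF hu ha hb hA hB.
have [al [be [ga [hg nab nag]]]] := residual_linear_form hs hF hu ha hb hA hB.
have [x1 [y1 [z1 [x2 [y2 [z2 [[h1 h2] hspan hind hz hy]]]]]]] := kernel_basis nab nag.
set c1 := comb u a b x1 y1 z1; set c2 := comb u a b x2 y2 z2.
have c1C := mem_line_addl c1 <[c2]>%VS; have c2C := mem_line_addr <[c1]>%VS c2.
exists (<[c1]> + <[c2]>)%VS; split.
- by split; [exact: (resid_dim hu ha hb) | exact: (resid_on_surface hg h1 h2)].
- apply/negP => /eqP e; rewrite e in c1C c2C.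
  by rewrite (comb_in_A hu ha hb c1C) (comb_in_A hu ha hb c2C) eqxx in hz.
- apply/negP => /eqP e; rewrite e in c1C c2C.
  by rewrite (comb_in_B hu ha hb c1C) (comb_in_B hu ha hb c2C) eqxx in hy.
- by rewrite subv_add -!memvE !comb_in_plane.
- exact: (resid_covers hg hspan).
Qed.

Lemma residual_line F (A B : {vspace V}) : smooth_surface F -> cubic_form F ->
  Qline_on F A -> Qline_on F B -> A != B -> (A :&: B)%VS != 0%VS ->
  exists C : {vspace V}, [/\ Qline_on F C, C != A, C != B, (C <= A + B)%VS &
   forall v, v \in (A + B)%VS -> F.@[fun i => v 0 i] = 0 ->
     [|| v \in A, v \in B | v \in C]].
Proof.
move=> hs hF [dA lA] [dB lB] hne hcap.
set u := vpick (A :&: B).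
have hu : u != 0 by rewrite vpick0.
have [huA huB] : u \in A /\ u \in B by apply/andP; rewrite -memv_cap memv_pick.
have [a [ha eA]] := plane_basis dA huA hu.
have [b [hb' eB]] := plane_basis dB huB hu.
have ecap : (A :&: B)%VS = <[u]>%VS.
  apply/eqP; rewrite eq_sym eqEdim -memvE memv_pick dim_vline hu /=.
  exact: dim_cap_planes.
have hb : b \notin (<[u]> + <[a]>)%VS.
  by apply: contra hb' => hbA; rewrite -ecap memv_cap eA hbA eB mem_line_addr.
rewrite eA in lA; rewrite eB in lB.
have [C [hC hCA hCB hCP hcov]] := residual_line_coords hs hF hu ha hb lA lB.
exists C; split; rewrite ?eA ?eB //.
  by apply: (subv_trans hCP); apply: addvS; [exact: subvv | exact: addvSr].
move=> v /memv_addP [w1 /memv_addP [w3 /vlineP [k1 ->] [w4 /vlineP [k2 ->] ->]]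
  [w2 /memv_addP [w5 /vlineP [k3 ->] [w6 /vlineP [k4 ->] ->]] ->]].
have -> : k1 *: u + k2 *: a + (k3 *: u + k4 *: b) = comb u a b (k1 + k3) k2 k4.
  by apply/rowP => i; rewrite !mxE; ring.
move=> /hcov /or3P [/eqP z0|/eqP y0|->]; rewrite ?orbT //.
  by rewrite /comb z0 scale0r addr0 memv_add // memvZ // memv_line.
apply/orP; right; apply/orP; left.
by rewrite /comb y0 scale0r addr0 memv_add // memvZ // memv_line.
Qed.

Lemma space_meets_plane (P D : {vspace V}) :
  \dim P = 3%N -> \dim D = 2%N -> (D :&: P)%VS != 0%VS.
Proof.
move=> dP dD; rewrite -dimv_eq0.
have : (\dim (D + P) <= 4)%N by have := dimvS (subvf (D + P)); rewrite dimvf.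
by have := dimv_sum_cap D P; rewrite dD dP; lia.
Qed.

(* If a Q-line D meets a Q-line X of a plane P whose Q-lines (other than D)
   all lie in P, then D lies in P: the residual line E of X and D lies in P,
   so the plane X + D is E + X = P. *)
Lemma plane_of_meeting_lines F (P X D : {vspace V}) :
  smooth_surface F -> cubic_form F ->
  Qline_on F X -> Qline_on F D -> X != D -> (X :&: D)%VS != 0%VS ->
  \dim P = 3%N -> (X <= P)%VS ->
  (forall E, Qline_on F E -> E != D -> (E <= P)%VS) -> (D <= P)%VS.
Proof.
move=> hs hF hX hD nXD cXD dP XP inP.
have [E [hE nEX nED EXD _]] := residual_line hs hF hX hD nXD cXD.
have [[dX _] [dD _] [dE _]] := And3 hX hD hE.
have eEX : (E + X)%VS = P.
  apply/eqP; rewrite eqEdim subv_add (inP E hE nED) XP dP /=.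
  have := dimv_sum_cap E X; have := dim_cap_planes dE dX nEX; rewrite dE dX; lia.
have -> : P = (X + D)%VS.
  apply/eqP; rewrite eqEdim -{1}eEX subv_add EXD addvSl /=.
  by rewrite (dim_add_meeting_planes dX dD nXD cXD) dP.
exact: addvSr.
Qed.

(* Then D meets the plane in a point of A, B or C, so D lies in the plane,
   hence is covered by A, B and C: impossible. *)
Lemma fourth_line_absent F (A B C D : {vspace V}) :
  smooth_surface F -> cubic_form F ->
  Qline_on F A -> Qline_on F B -> Qline_on F C -> Qline_on F D ->
  A != B -> [/\ D != A, D != B & D != C] -> (A :&: B)%VS != 0%VS ->
  (forall E, Qline_on F E -> E != D -> (E <= A + B)%VS) ->
  ~ (forall v, v \in (A + B)%VS -> F.@[fun i => v 0 i] = 0 ->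
       [|| v \in A, v \in B | v \in C]).
Proof.
move=> hs hF hA hB hC hD nAB [nA nB nC] hcap inP hcov.
have [[dA _] [dB _] [dC _] [dD lD]] := And4 hA hB hC hD.
have dP := dim_add_meeting_planes dA dB nAB hcap.
have DP : (D <= A + B)%VS.
  set v := vpick (D :&: (A + B)).
  have hv0 : v != 0 by rewrite vpick0 space_meets_plane.
  have [hvD hvP] : v \in D /\ v \in (A + B)%VS by apply/andP; rewrite -memv_cap memv_pick.
  have meet X : Qline_on F X -> X != D -> v \in X -> (D <= A + B)%VS.
    move=> hX nX hvX; apply: (plane_of_meeting_lines hs hF hX hD nX _ dP _ inP).
      by apply: contraNneq hv0 => e; rewrite -memv0 -e memv_cap hvX hvD.
    exact: inP.
  by case/or3P: (hcov v hvP (rat_pts_on_surface lD hvD)); apply: meet;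
    rewrite // eq_sym.
apply: (plane_not_covered (And4 dA dB dC dD) (And3 nA nB nC)) => v hv.
by apply: hcov; [exact: (subvP DP) | exact: rat_pts_on_surface lD hv].
Qed.

Lemma no_four_lines_with_meeting_pair F (s : seq {vspace V}) (A B : {vspace V}) :
  smooth_surface F -> cubic_form F -> uniq s -> size s = 4%N ->
  (forall W, W \in s <-> Qline_on F W) ->
  A \in s -> B \in s -> A != B -> (A :&: B)%VS != 0%VS -> False.
Proof.
move=> hs hF us s4 hiff As Bs nAB hcap.
have [hA hB] := (proj1 (hiff A) As, proj1 (hiff B) Bs).
have [C [hC nCA nCB hCP hcov]] := residual_line hs hF hA hB nAB hcap.
have [D Ds nD] : exists2 D, D \in s & D \notin [:: A; B; C].
  apply/hasP; apply: contraT => /hasPn sub.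
  by have := uniq_leq_size us (fun W hW => negbNE (sub W hW)); rewrite s4.
move: nD; rewrite !inE !negb_or => /and3P [nDA nDB nDC].
have uABCD : uniq [:: A; B; C; D].
  by rewrite /= !inE !negb_or nAB (eq_sym A C) nCA (eq_sym A D) nDA (eq_sym B C) nCB
    (eq_sym B D) nDB (eq_sym C D) nDC.
have [_ eqs] : (size [:: A; B; C; D] = size s) * ([:: A; B; C; D] =i s).
  apply: uniq_min_size => //; last by rewrite s4.
  by move=> W; rewrite !inE => /or4P [] /eqP ->; rewrite // (proj2 (hiff C) hC).
apply: (fourth_line_absent hs hF hA hB hC (proj1 (hiff D) Ds) nAB (And3 nDA nDB nDC) hcap _ hcov).
move=> E /hiff; rewrite -eqs !inE => /or4P [] /eqP -> //; rewrite ?eqxx //.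
- by move=> _; exact: addvSl.
- by move=> _; exact: addvSr.
Qed.

Local Close Scope ring_scope.

Theorem corollary4p12 (F : {mpoly rat[4]}) :
  cubic_form F -> smooth_surface F ->
  ~ has_three_disjoint_Qlines F ->
  ~ exactly_n_Qlines F 4.
Proof.
move=> hF hs hno [s [us s4 hiff]].
case: s us s4 hiff => [|W1 [|W2 [|W3 [|W4 [|? ?]]]]] // us s4 hiff.
have hQ W : W \in [:: W1; W2; W3; W4] -> Qline_on F W := proj1 (hiff W).
have [W1s W2s W3s] : [/\ W1 \in [:: W1; W2; W3; W4], W2 \in [:: W1; W2; W3; W4]
  & W3 \in [:: W1; W2; W3; W4]] by rewrite !inE !eqxx !orbT.
move: (us); rewrite /= !inE !negb_or => /and4P [/and3P [n12 n13 _] /andP [n23 _] _ _].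
(* by hypothesis, two of the first three lines meet *)
have : ~~ [&& (W1 :&: W2)%VS == 0%VS, (W1 :&: W3)%VS == 0%VS & (W2 :&: W3)%VS == 0%VS].
  apply/negP => /and3P [/eqP e12 /eqP e13 /eqP e23]; apply: hno.
  by exists W1, W2, W3; split; [apply: hQ | apply: hQ | apply: hQ | ].
rewrite !negb_and => /or3P [] meet.
- exact: (no_four_lines_with_meeting_pair hs hF us s4 hiff W1s W2s n12 meet).
- exact: (no_four_lines_with_meeting_pair hs hF us s4 hiff W1s W3s n13 meet).
- exact: (no_four_lines_with_meeting_pair hs hF us s4 hiff W2s W3s n23 meet).
Qed.
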